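(* Let $T$ be a caterpillar tree such that every cutpoint of $T$ has degree at least three. Then $\dim R/I(L(T))=s$, where $s$ is the number of cutpoints of $T$, equivalently the number of maximal cliques of $L(T)$.
   Context: A caterpillar tree is a tree in which removing all vertices of degree $1$ leaves a chordless path. A cutpoint is a vertex whose removal disconnects the graph. The line graph $L(T)$ has vertex set $E(T)$, two vertices adjacent iff the corresponding edges share a vertex. $R=\Bbbk[e_{uv}:\{u,v\}\in E(T)]$ for a field $\Bbbk$, $I(L(T))=\langle e_fe_g: f\neq g\in E(T),\ f\cap g\neq\emptyset\rangle$, and $\dim$ is Krull dimension. *)

From HB Require Import structures.
From mathcomp Require Import all_boot all_order all_algebra.
From mathcomp Require Import mpoly.
Set Implicit Arguments. Unset Strict Implicit. Unset Printing Implicit Defensive.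
Import GRing.Theory.
Local Open Scope ring_scope.

Definition simple_graph (V : finType) (e : rel V) : Prop :=
  ssrbool.symmetric e /\ ssrbool.irreflexive e.

Definition acyclic (V : finType) (e : rel V) : Prop :=
  forall c : seq V, uniq c -> (2 < size c)%N -> ~~ cycle e c.

Definition is_tree (V : finType) (e : rel V) : Prop :=
  simple_graph e /\ (forall x y, connect e x y) /\ acyclic e.

Definition degree (V : finType) (e : rel V) (x : V) : nat := #|[set y | e x y]|.

Definition rel_avoid (V : finType) (e : rel V) (A : {set V}) : rel V :=
  fun a b => [&& e a b, a \notin A & b \notin A].

Definition cutpoint (V : finType) (e : rel V) (x : V) : bool :=
  [exists y, exists z, [&& y != x, z != x & ~~ connect (rel_avoid e [set x]) y z]].

Definition cutpoints (V : finType) (e : rel V) : {set V} := [set x | cutpoint e x].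

Definition induced_chordless_path (V : finType) (e : rel V) (S : {set V}) : Prop :=
  exists (v : V) (p : seq V),
    [/\ uniq (v :: p), (forall x, (x \in v :: p) = (x \in S)) &
    forall i j, (i < size (v :: p))%N -> (j < size (v :: p))%N ->
      e (nth v (v :: p) i) (nth v (v :: p) j) = ((i.+1 == j) || (j.+1 == i))].

Definition caterpillar (V : finType) (e : rel V) : Prop :=
  is_tree e /\ induced_chordless_path e [set x | degree e x != 1%N].

Definition edges (V : finType) (e : rel V) : {set {set V}} :=
  [set u : {set V} | [exists x, exists y, e x y && (u == [set x; y])]].

(* variable e_f for the edge f = enum_val i, i : 'I_#|edges e| *)
Definition edge_of (V : finType) (e : rel V) (i : 'I_#|edges e|) : {set V} :=
  enum_val i.

Definition is_ideal (A : comNzRingType) (P : A -> Prop) : Prop :=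
  [/\ P 0, (forall p q, P p -> P q -> P (p + q)) & (forall a p, P p -> P (a * p))].

Definition is_prime_ideal (A : comNzRingType) (P : A -> Prop) : Prop :=
  [/\ is_ideal P, ~ P 1 & (forall p q, P (p * q) -> P p \/ P q)].

Definition ideal_gen (A : comNzRingType) (G : A -> Prop) : A -> Prop :=
  fun p => forall J : A -> Prop, is_ideal J -> (forall g, G g -> J g) -> J p.

Definition line_graph_gens (F : fieldType) (V : finType) (e : rel V)
  : {mpoly F[#|edges e|]} -> Prop :=
  fun p => exists i j : 'I_#|edges e|,
    [/\ i != j, edge_of i :&: edge_of j != set0 & p = 'X_i * 'X_j].

Definition edge_ideal_line_graph (F : fieldType) (V : finType) (e : rel V)
  : {mpoly F[#|edges e|]} -> Prop := ideal_gen (@line_graph_gens F V e).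

(* a chain P_0 < P_1 < ... < P_n of prime ideals of A containing I, of length n;
   these correspond exactly to chains of primes of A/I *)
Definition prime_chain_over (A : comNzRingType) (I : A -> Prop)
    (n : nat) (P : nat -> A -> Prop) : Prop :=
  [/\ (forall k, (k <= n)%N -> is_prime_ideal (P k)),
      (forall k, (k <= n)%N -> forall a, I a -> P k a),
      (forall k, (k < n)%N -> forall a, P k a -> P k.+1 a) &
      (forall k, (k < n)%N -> exists2 a, P k.+1 a & ~ P k a)].

Definition quot_krull_dim_eq (A : comNzRingType) (I : A -> Prop) (d : nat) : Prop :=
  (exists P, prime_chain_over I d P) /\
  (forall n P, prime_chain_over I n P -> (n <= d)%N).

Arguments edge_ideal_line_graph F [V] e.

(* A prime P containing I(L(T)) cannot omit two variables of adjacent edges,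
   so the variables it omits index a matching U of T. Modulo P the ring is a
   polynomial ring in the variables of U, and there a chain of primes has
   length at most #|U|: witnesses of the strict inclusions of a prime chain
   are algebraically independent, while any #|U| + 1 polynomials in #|U|
   variables satisfy a polynomial relation (there are too many monomials of
   bounded degree in them). Conversely, killing the variables outside a
   matching M and then those of M one at a time gives a chain of length #|M|.
   So dim R/I(L(T)) is the matching number of T. In a caterpillar every edge
   has an end that is a cutpoint, so a matching has at most s edges; when every
   cutpoint has degree at least 3 it has a pendant leaf, and these s pendant
   edges form a matching. *)

From HB Require Import structures.
From mathcomp Require Import all_boot all_order all_algebra.
From mathcomp Require Import mpoly zify.
From Stdlib Require Import ClassicalEpsilon.

Set Implicit Arguments. Unset Strict Implicit. Unset Printing Implicit Defensive.
Import GRing.Theory.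
Local Open Scope ring_scope.

Section Ideals.
Variable R : comNzRingType.
Implicit Types (P : R -> Prop) (x y : R).

Lemma is_idealN P x : is_ideal P -> P x -> P (- x).
Proof. by case=> _ _ PM Px; rewrite -mulN1r; apply: PM. Qed.

Lemma is_idealD P x y : is_ideal P -> P x -> P y -> P (x + y).
Proof. by case=> _ PD _; apply: PD. Qed.

Lemma is_idealB P x y : is_ideal P -> P x -> P y -> P (x - y).
Proof. by move=> idP Px Py; apply: is_idealD (is_idealN _ _) => //. Qed.

Lemma is_idealMl P x y : is_ideal P -> P y -> P (x * y).
Proof. by case=> _ _ PM; apply: PM. Qed.

Lemma is_idealMr P x y : is_ideal P -> P x -> P (x * y).
Proof. by move=> idP Px; rewrite mulrC; apply: is_idealMl. Qed.

Lemma is_ideal_sum P (I : Type) (r : seq I) (Q : pred I) (f : I -> R) :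
  is_ideal P -> (forall i, Q i -> P (f i)) -> P (\sum_(i <- r | Q i) f i).
Proof. by case=> P0 PD _ Pf; elim/big_ind: _. Qed.

Lemma is_prime_idealX P x n : is_prime_ideal P -> P (x ^+ n) -> P x.
Proof.
case=> _ P1 Pprime; elim: n => [|n IHn]; first by rewrite expr0.
by rewrite exprS => /Pprime [].
Qed.

Lemma prime_ideal_notin_invertible P x y : is_prime_ideal P -> y * x = 1 -> ~ P x.
Proof. by case=> idP P1 _ yx1 Px; apply: P1; rewrite -yx1; apply: is_idealMl. Qed.

End Ideals.

Section PrimeChains.
Variables (R : comNzRingType) (I : R -> Prop) (n : nat) (P : nat -> R -> Prop).
Hypothesis chainP : prime_chain_over I n P.

Lemma prime_chain_prime k : (k <= n)%N -> is_prime_ideal (P k).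
Proof. by case: chainP => Pprime _ _ _; apply: Pprime. Qed.

Lemma prime_chain_mono j k a : (j <= k <= n)%N -> P j a -> P k a.
Proof.
case/andP=> + kn; elim: k kn => [|k IHk] kn; first by rewrite leqn0 => /eqP ->.
rewrite leq_eqVlt ltnS => /orP [/eqP -> //| jk] Pja.
by case: chainP => _ _ Pinc _; apply: Pinc => //; apply: IHk => //; apply: ltnW.
Qed.

Lemma prime_chain_take k : (k <= n)%N -> prime_chain_over I k P.
Proof.
case: chainP => Pprime PI Pinc Pstrict kn; split=> j jk.
- by apply: Pprime; apply: leq_trans kn.
- by apply: PI; apply: leq_trans kn.
- by apply: Pinc; apply: leq_trans kn.
- by apply: Pstrict; apply: leq_trans kn.
Qed.

Lemma prime_chain_witnesses :
  exists xs : seq R, size xs = n /\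
    forall j, (j < n)%N -> P j.+1 xs`_j /\ ~ P j xs`_j.
Proof.
case: chainP => _ _ _ Pstrict.
suff [xs [sz_xs xsP]] : exists xs : seq R, size xs = n /\
    forall j, (j < size xs)%N -> P j.+1 xs`_j /\ ~ P j xs`_j.
  by exists xs; rewrite -sz_xs.
elim: n Pstrict => [|k IHk] Pstrict; first by exists [::].
have [|xs [sz_xs xsP]] := IHk; first by move=> j jk; apply: Pstrict; apply: ltnW.
have [x Px nPx] := Pstrict k (ltnSn k).
exists (rcons xs x); rewrite size_rcons sz_xs; split=> // j; rewrite ltnS.
rewrite nth_rcons sz_xs leq_eqVlt => /orP [/eqP ->|jk]; first by rewrite ltnn eqxx.
by rewrite jk; apply: xsP; rewrite sz_xs.
Qed.

End PrimeChains.

Lemma prime_chain_behead (R : comNzRingType) (I : R -> Prop) k P :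
  prime_chain_over I k.+1 P -> prime_chain_over I k (fun j => P j.+1).
Proof.
by case=> Pprime PI Pinc Pstrict; split=> j jk;
  [apply: Pprime | apply: PI | apply: Pinc | apply: Pstrict].
Qed.

Definition powprod (R : comNzRingType) B (xs : seq R) (mu : seq 'I_B) : R :=
  \prod_(p <- zip xs mu) p.1 ^+ p.2.

Lemma powprod_cons (R : comNzRingType) B x xs (a : 'I_B) mu :
  powprod (x :: xs) (a :: mu) = x ^+ a * powprod xs mu :> R.
Proof. by rewrite /powprod /= big_cons. Qed.

Lemma powprod_nil (R : comNzRingType) B (xs : seq R) (mu : seq 'I_B) :
  (xs == [::]) || (mu == [::]) -> powprod xs mu = 1.
Proof. by case: xs mu => [|x xs] [|a mu] //= _; rewrite /powprod big_nil. Qed.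

Lemma rmorph_powprod (R S : comNzRingType) (f : {rmorphism R -> S}) B xs (mu : seq 'I_B) :
  f (powprod xs mu) = powprod (map f xs) mu.
Proof.
elim: xs mu => [|x xs IHxs] [|a mu]; try by rewrite !powprod_nil ?rmorph1.
by rewrite map_cons !powprod_cons rmorphM rmorphXn IHxs.
Qed.

Lemma sum_tuple_cons (V : nmodType) k B (f : k.+1.-tuple 'I_B -> V) :
  \sum_mu f mu = \sum_(a : 'I_B) \sum_(nu : k.-tuple 'I_B) f [tuple of a :: nu].
Proof.
rewrite pair_bigA (reindex (fun p : 'I_B * k.-tuple 'I_B => [tuple of p.1 :: p.2])) //=.
exists (fun mu : k.+1.-tuple 'I_B => (thead mu, [tuple of behead mu])).
  by move=> [a nu] _; rewrite theadE; congr pair; apply: val_inj.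
by move=> mu _; rewrite -tuple_eta.
Qed.

Lemma sum_tuple0 (V : nmodType) B (f : 0.-tuple 'I_B -> V) : \sum_mu f mu = f [tuple].
Proof. by rewrite (big_pred1 [tuple]) // => mu; rewrite [mu]tuple0 /= eq_refl. Qed.

Section ChainWitnesses.
Variable R : comNzRingType.

Lemma sum_pow_first_nonzero (x : R) B (g : 'I_B -> R) (a0 : 'I_B) :
  (forall a : 'I_B, (a < a0)%N -> g a = 0) ->
  \sum_(a : 'I_B) x ^+ a * g a =
    x ^+ a0 * (g a0 + x * \sum_(a : 'I_B | (a0 < a)%N) x ^+ (a - a0.+1) * g a).
Proof.
move=> g_lt; rewrite (bigD1 a0) //= (bigID (fun a : 'I_B => (a0 < a)%N)) /=.
rewrite [X in _ + (_ + X)]big1 => [|a /andP [neq_a lt_a]]; last first.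
  by rewrite g_lt ?mulr0 //; move: neq_a lt_a; rewrite -val_eqE /=; lia.
rewrite addr0 mulrDr mulr_sumr mulr_sumr; congr (_ + _); apply: eq_big => [a|a /andP [_ lt_a]].
  by case: (eqVneq a a0) => [->|]; rewrite ?ltnn ?andbF.
by rewrite !mulrA -exprSr -exprD; congr (x ^+ _ * _); lia.
Qed.

Lemma prime_sum_pow_notin (P Q : R -> Prop) (x : R) B (g : 'I_B -> R) (a0 : 'I_B) :
  is_prime_ideal P -> is_ideal Q -> (forall a, P a -> Q a) -> Q x -> ~ P x ->
  (forall a : 'I_B, (a < a0)%N -> g a = 0) -> ~ Q (g a0) ->
  ~ P (\sum_(a : 'I_B) x ^+ a * g a).
Proof.
move=> Pprime idQ PQ Qx nPx g_lt nQg; rewrite (sum_pow_first_nonzero _ g_lt).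
set h := \sum_(a | _) _; case: (Pprime) => _ _ Pmul /Pmul [/(is_prime_idealX Pprime) //|].
move/PQ => Qgxh; apply: nQg; rewrite -(addrK (x * h) (g a0)).
by apply: is_idealB => //; apply: is_idealMr.
Qed.

(* Sort by the exponent of [x_0]: the lowest exponent with a nonzero
   coefficient survives modulo [P 0] because [x_0 \notin P 0], and its
   coefficient is outside [P 1] by induction on the shifted chain. *)
Lemma prime_chain_witnesses_indep k (I : R -> Prop) (P : nat -> R -> Prop)
    (xs : seq R) B (c : k.-tuple 'I_B -> R) :
  prime_chain_over I k P -> size xs = k ->
  (forall j, (j < k)%N -> P j.+1 xs`_j /\ ~ P j xs`_j) ->
  (forall mu, c mu != 0 -> ~ P k (c mu)) -> (exists mu, c mu != 0) ->
  ~ P 0%N (\sum_mu c mu * powprod xs mu).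
Proof.
elim: k P xs c => [|k IHk] P xs c chainP sz_xs xsP cP [mu0 cmu0].
  by rewrite sum_tuple0 powprod_nil ?orbT // mulr1; rewrite (tuple0 mu0) in cmu0; apply: cP.
case: xs sz_xs xsP => [|x xs] //= [sz_xs] xsP.
pose g a := \sum_(nu : k.-tuple 'I_B) c [tuple of a :: nu] * powprod xs nu.
have -> : \sum_mu c mu * powprod (x :: xs) mu = \sum_(a : 'I_B) x ^+ a * g a.
  rewrite sum_tuple_cons; apply: eq_bigr => a _; rewrite mulr_sumr.
  by apply: eq_bigr => nu _; rewrite powprod_cons mulrCA.
pose nzhead (a : 'I_B) := [exists nu : k.-tuple 'I_B, c [tuple of a :: nu] != 0].
have nzhead_mu0 : nzhead (thead mu0).
  by apply/existsP; exists [tuple of behead mu0]; rewrite -tuple_eta.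
case: (arg_minnP (@nat_of_ord B) nzhead_mu0) => a0 nzhead_a0 a0_min.
have [x_in x_notin] := xsP 0%N isT.
have P0prime := prime_chain_prime chainP (leq0n k.+1).
have [P1ideal _ _] := prime_chain_prime chainP (isT : 1 <= k.+1)%N.
apply: (prime_sum_pow_notin (a0 := a0) P0prime P1ideal _ x_in x_notin).
- by move=> a; apply: (prime_chain_mono chainP).
- move=> a lt_a; rewrite /g big1 // => nu _.
  have /existsPn/(_ nu)/negbNE/eqP -> : ~~ nzhead a.
    by apply/negP => /a0_min; rewrite leqNgt lt_a.
  by rewrite mul0r.
- apply: (IHk (fun j => P j.+1) xs (fun nu => c [tuple of a0 :: nu])) => //.
  + exact: prime_chain_behead.
  + by move=> j jk; apply: (xsP j.+1).
  + by move=> nu; apply: cP.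
  + by case/existsP: nzhead_a0 => nu cnu; exists nu.
Qed.

End ChainWitnesses.

Section AlgebraicDependence.
Variables (F : fieldType) (k : nat).

Lemma mnm_le_mdeg (m : 'X_{1..k}) i : (m i <= mdeg m)%N.
Proof. by rewrite mdegE (bigD1 i) //= leq_addr. Qed.

Lemma card_bmultinom_le K : (#|{: 'X_{1..k < K}}| <= K ^ k)%N.
Proof.
have -> : (K ^ k)%N = #|{: {ffun 'I_k -> 'I_K}}| by rewrite card_ffun !card_ord.
pose f (m : 'X_{1..k < K}) :=
  [ffun i => Ordinal (leq_ltn_trans (mnm_le_mdeg m i) (bmdeg m))].
apply: (leq_card f) => m1 m2 /ffunP f12; apply/val_inj/mnmP => i.
by have /(congr1 val) := f12 i; rewrite !ffunE.
Qed.

(* A linear relation is a vector in the left kernel of the matrix of coefficients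
   of the [f i] on the monomials of degree [< K]. *)
Lemma mpoly_linear_dependence (I : finType) (f : I -> {mpoly F[k]}) K :
  (forall i, msize (f i) <= K)%N -> (K ^ k < #|I|)%N ->
  exists c : I -> F, (exists i, c i != 0) /\ \sum_i (c i)%:MP * f i = 0.
Proof.
move=> size_f card_I.
pose J := 'X_{1..k < K}.
pose A := \matrix_(i < #|I|, j < #|{: J}|) (f (enum_val i))@_(enum_val j : J).
have /rowV0Pn [v /sub_kermxP vA v_neq0] : kermx A != 0.
  rewrite -mxrank_eq0 mxrank_ker subn_eq0 -ltnNge.
  by apply: leq_ltn_trans (rank_leq_col A) (leq_ltn_trans (card_bmultinom_le K) card_I).
exists (fun i => v 0 (enum_rank i)); split.
  apply/existsP; apply: contraNT v_neq0 => /existsPn v0; apply/eqP/rowP => j.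
  by rewrite mxE -[j]enum_valK; apply/eqP/negbNE/v0.
apply/mpolyP => m; rewrite mcoeff0 raddf_sum /=.
under eq_bigr do rewrite mcoeffCM.
have [m_lt|m_ge] := ltnP (mdeg m) K; last first.
  rewrite big1 // => i _; apply/eqP; rewrite mulf_eq0 mcoeff_eq0; apply/orP; right.
  exact/msize_mdeg_ge/(leq_trans (size_f i) m_ge).
rewrite -[RHS](_ : (v *m A) 0 (enum_rank (BMultinom m_lt : J)) = 0); last first.
  by rewrite vA mxE.
rewrite mxE (reindex (@enum_val I predT)) /=; last first.
  by exists enum_rank => i _; [rewrite enum_valK | rewrite enum_rankK].
by apply: eq_bigr => i _; rewrite enum_valK mxE enum_rankK.
Qed.

Lemma msizeXn_le (p : {mpoly F[k]}) a : (msize (p ^+ a) <= 1 + a * (msize p).+1)%N.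
Proof.
elim: a => [|a IHa]; first by rewrite expr0 msize1.
by rewrite exprS; apply: leq_trans (msizeM_le _ _) _; lia.
Qed.

Lemma msize_powprod B d (xs : seq {mpoly F[k]}) (mu : seq 'I_B) :
  all (fun x => msize x <= d)%N xs ->
  (msize (powprod xs mu) <= 1 + size xs * (2 + B * d.+1))%N.
Proof.
elim: xs mu => [|x xs IHxs] [|a mu] /=; try by rewrite powprod_nil ?msize1.
case/andP=> size_x size_xs; rewrite powprod_cons.
apply: leq_trans (msizeM_le _ _) _.
apply: leq_ltn_trans (leq_add (msizeXn_le x a) (IHxs mu size_xs)) _.
have : (a * (msize x).+1 <= B * d.+1)%N by apply: leq_mul; [apply: ltnW | rewrite ltnS].
rewrite mulSn; lia.
Qed.

(* Exponents below [B] give [B ^ k.+1] monomials in the [xs], all of size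
   [O(B)], hence in a space of dimension [O(B ^ k)]. *)
Lemma mpoly_algebraic_dependence (xs : seq {mpoly F[k]}) : size xs = k.+1 ->
  exists B (c : k.+1.-tuple 'I_B -> F),
    (exists mu, c mu != 0) /\ \sum_mu (c mu)%:MP * powprod xs mu = 0.
Proof.
move=> sz_xs; set d := \max_(x <- xs) msize x.
have size_xs : all (fun x => msize x <= d)%N xs.
  by apply/allP => x x_in; rewrite /d (big_rem x x_in) leq_maxl.
set c0 := (k.+1 * (d + 3)).+1; set B := (c0 ^ k).+1.
set K := (1 + k.+1 * (2 + B * d.+1))%N.
have [] := @mpoly_linear_dependence _ (fun mu : k.+1.-tuple 'I_B => powprod xs mu) K.
- by move=> mu; apply: leq_trans (msize_powprod _ size_xs) _; rewrite sz_xs.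
- have K_le : (K <= c0 * B)%N by rewrite /K /c0; nia.
  have /(_ k) K_pow_le : forall e, (K ^ e <= (c0 * B) ^ e)%N.
    by elim=> // e IHe; rewrite !expnS leq_mul.
  rewrite card_tuple card_ord; apply: leq_ltn_trans K_pow_le _.
  by rewrite expnMn expnS ltn_pmul2r ?expn_gt0.
by move=> c [nz_c rel_c]; exists B, c.
Qed.

End AlgebraicDependence.

Lemma comp_mpolyA (R : comNzRingType) n k l (p : {mpoly R[n]})
    (lq : n.-tuple {mpoly R[k]}) (lr : k.-tuple {mpoly R[l]}) :
  (p \mPo lq) \mPo lr = p \mPo [tuple tnth lq i \mPo lr | i < n].
Proof.
rewrite [p \mPo lq]comp_mpolyEX [RHS]comp_mpolyEX raddf_sum /=.
apply: eq_bigr => m _; rewrite comp_mpolyZ !comp_mpolyX rmorph_prod /=.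
by congr (_ *: _); apply: eq_bigr => i _; rewrite rmorphXn tnth_mktuple.
Qed.

Section VariableSubstitutions.
Variables (F : fieldType) (N : nat).
Implicit Types (S U : {set 'I_N}) (p : {mpoly F[N]}).

Definition zero_vars S : N.-tuple {mpoly F[N]} :=
  [tuple if i \in S then 0 else 'X_i | i < N].

Definition restrict_vars U : N.-tuple {mpoly F[#|U|]} :=
  [tuple oapp (fun j => 'X_j) 0 [pick j : 'I_#|U| | enum_val j == i] | i < N].

Definition extend_vars U : #|U|.-tuple {mpoly F[N]} :=
  [tuple 'X_(enum_val j) | j < #|U|].

Lemma comp_mpoly_zero_varsX S i :
  'X_i \mPo zero_vars S = if i \in S then 0 else 'X_i.
Proof. by rewrite comp_mpolyXU -tnth_nth tnth_mktuple. Qed.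

Lemma comp_mpoly_zero_varsK S S' p : S \subset S' ->
  (p \mPo zero_vars S) \mPo zero_vars S' = p \mPo zero_vars S'.
Proof.
move=> sSS'; rewrite comp_mpolyA; congr (_ \mPo _); apply: eq_from_tnth => i.
rewrite !tnth_mktuple; case: ifP => [iS|_]; last exact: comp_mpoly_zero_varsX.
by rewrite comp_mpoly0 (subsetP sSS' _ iS).
Qed.

Lemma comp_mpoly_restrict_extend U p :
  (p \mPo restrict_vars U) \mPo extend_vars U = p \mPo zero_vars (~: U).
Proof.
rewrite comp_mpolyA; congr (_ \mPo _); apply: eq_from_tnth => i.
rewrite !tnth_mktuple inE; case: pickP => [j /eqP <-|no_j] /=.
  by rewrite enum_valP comp_mpolyXU -tnth_nth tnth_mktuple.
rewrite comp_mpoly0; case: ifPn => // /negbNE iU.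
by have := no_j (enum_rank_in iU i); rewrite enum_rankK_in ?eqxx.
Qed.

Lemma monomial_in_ideal (P : {mpoly F[N]} -> Prop) (m : 'X_{1..N}) i :
  is_ideal P -> P 'X_i -> m i != 0%N -> P 'X_[m].
Proof.
move=> idP Pi mi; rewrite mpolyXE_id (bigD1 i) //=; apply: is_idealMr => //.
by case: (m i) mi => // e _; rewrite exprS; apply: is_idealMr.
Qed.

Lemma sub_comp_zero_vars_in_ideal (P : {mpoly F[N]} -> Prop) S p :
  is_ideal P -> (forall i, i \in S -> P 'X_i) -> P (p - (p \mPo zero_vars S)).
Proof.
move=> idP PS; rewrite comp_mpolyEX {1}[p]mpolyE -sumrB.
apply: is_ideal_sum => // m _; rewrite -scalerBr -mul_mpolyC; apply: is_idealMl => //.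
rewrite comp_mpolyX; under eq_bigr do rewrite tnth_mktuple.
have [i /andP [iS mi]|no_i] := pickP (fun i => (i \in S) && (m i != 0%N)).
  rewrite (bigD1 i) //= iS expr0n (negbTE mi) mul0r subr0.
  exact: monomial_in_ideal (PS _ iS) mi.
rewrite [X in _ - X](_ : _ = 'X_[m]) ?subrr; first by case: idP.
rewrite mpolyXE_id; apply: eq_bigr => i _; case: ifP => // iS.
by have := no_i i; rewrite iS /= => /negbFE/eqP ->; rewrite !expr0.
Qed.

(* Modulo [P 0], the chain lives in the polynomial ring in the variables of
   [U]; witnesses of its strictness are algebraically independent
   (prime_chain_witnesses_indep), but any [#|U|.+1] elements there are not. *)
Lemma prime_chain_length_le_card (I : {mpoly F[N]} -> Prop) n P U :
  prime_chain_over I n P -> (forall i, i \notin U -> P 0%N 'X_i) -> (n <= #|U|)%N.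
Proof.
move=> chainP PU; rewrite leqNgt; apply/negP => Un.
have [xs [sz_xs xsP]] := prime_chain_witnesses chainP.
pose ys := map (comp_mpoly (restrict_vars U)) (take #|U|.+1 xs).
have sz_ys : size ys = #|U|.+1 by rewrite size_map size_takel // sz_xs.
have [B [c [nz_c rel_c]]] := mpoly_algebraic_dependence sz_ys.
have chainU := prime_chain_take chainP Un.
apply: (prime_chain_witnesses_indep (xs := map (comp_mpoly (extend_vars U)) ys)
  (c := fun mu => (c mu)%:MP) chainU).
- by rewrite size_map.
- move=> j ju; have jn := leq_trans ju Un.
  rewrite /ys -map_comp (nth_map 0) ?size_takel ?sz_xs // nth_take //=.
  have [Px nPx] := xsP j jn.
  rewrite comp_mpoly_restrict_extend; set x := xs`_j in Px nPx *; set x' := x \mPo _.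
  have Pxx' k : (k <= n)%N -> P k (x - x').
    move=> kn; apply: (prime_chain_mono chainP (j := 0%N)) => //.
    apply: sub_comp_zero_vars_in_ideal => [|i]; last by rewrite inE; apply: PU.
    by case: (prime_chain_prime chainP (leq0n n)).
  have [idPj _ _] := prime_chain_prime chainP (ltnW jn).
  have [idPj1 _ _] := prime_chain_prime chainP jn.
  split.
    by rewrite -[x'](subKr x); apply: is_idealB => //; apply: Pxx'.
  move=> Px'; apply: nPx; rewrite -(subrK x' x).
  by apply: is_idealD => //; apply: Pxx'; apply: ltnW.
- move=> mu; rewrite mpolyC_eq0 => cmu.
  apply: (prime_ideal_notin_invertible (y := (c mu)^-1%:MP)).
    by have := prime_chain_prime chainP Un.
  by rewrite -rmorphM /= mulVf ?rmorph1.
- by case: nz_c => mu cmu; exists mu; rewrite mpolyC_eq0.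
- have -> : \sum_mu (c mu)%:MP * powprod (map (comp_mpoly (extend_vars U)) ys) mu = 0.
    rewrite -[RHS](rmorph0 (comp_mpoly (extend_vars U))) -rel_c rmorph_sum /=.
    by apply: eq_bigr => mu _; rewrite rmorphM /= comp_mpolyC rmorph_powprod.
  by case: (prime_chain_prime chainP (leq0n n)) => [[]].
Qed.

End VariableSubstitutions.

Lemma comp_mpoly_ker_prime (F : fieldType) n k (lq : n.-tuple {mpoly F[k]}) :
  is_prime_ideal (fun p : {mpoly F[n]} => p \mPo lq = 0).
Proof.
split; first split.
- exact: comp_mpoly0.
- by move=> p q p0 q0; rewrite comp_mpolyD p0 q0 addr0.
- by move=> a p p0; rewrite rmorphM /= p0 mulr0.
- by rewrite comp_mpoly1; apply/eqP; apply: oner_neq0.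
- by move=> p q; rewrite rmorphM /= => /eqP; rewrite mulf_eq0 => /orP [] /eqP; [left|right].
Qed.

Section EdgeIdeal.
Variables (F : fieldType) (N : nat) (adj : rel 'I_N).

Definition edge_ideal_gens : {mpoly F[N]} -> Prop :=
  fun p => exists i j, [/\ i != j, adj i j & p = 'X_i * 'X_j].

Definition stable_set (U : {set 'I_N}) : Prop :=
  {in U &, forall i j, i != j -> ~~ adj i j}.

Lemma stable_set_prime_chain (M : {set 'I_N}) s : stable_set M -> (s <= #|M|)%N ->
  exists P, prime_chain_over (ideal_gen edge_ideal_gens) s P.
Proof.
move=> stableM sM; pose S k := [set i | (i \notin M) || (i \in take k (enum M))].
exists (fun k p => p \mPo zero_vars F (S k) = 0); split.
- by move=> k _; apply: comp_mpoly_ker_prime.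
- move=> k _ p Ip; apply: (Ip (fun q => q \mPo zero_vars F (S k) = 0)).
    by case: (comp_mpoly_ker_prime (zero_vars F (S k))).
  move=> _ [i [j [ij adj_ij ->]]]; rewrite rmorphM /= !comp_mpoly_zero_varsX !inE.
  have [iM|] := boolP (i \in M); last by rewrite mul0r.
  have [jM|] := boolP (j \in M); last by rewrite mulr0.
  by move: (stableM i j iM jM ij); rewrite adj_ij.
- move=> k _ p p0; rewrite -(@comp_mpoly_zero_varsK _ _ (S k)) ?p0 ?comp_mpoly0 //.
  apply/subsetP => i; rewrite !inE => /orP [->//|ik]; apply/orP; right.
  have iM : i \in enum M by apply: mem_take ik.
  rewrite in_take // in ik; rewrite in_take //; lia.
- move=> k ks; pose x := enum_val (Ordinal (leq_trans ks sM)).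
  have x_idx : index x (enum M) = k.
    by rewrite /x (enum_val_nth x) index_uniq ?enum_uniq // -cardE (leq_trans ks sM).
  have xM : x \in enum M by rewrite mem_enum enum_valP.
  exists 'X_x; rewrite comp_mpoly_zero_varsX !inE -mem_enum xM /= in_take // x_idx.
    by rewrite ltnSn.
  by rewrite ltnn; apply/eqP; rewrite -msize_poly_eq0 msizeX.
Qed.

Lemma edge_ideal_prime_chain_le n P :
  prime_chain_over (ideal_gen edge_ideal_gens) n P -> exists2 U, stable_set U & (n <= #|U|)%N.
Proof.
move=> chainP; pose U := [set i | ~~ excluded_middle_informative (P 0%N 'X_i)].
have UP i : reflect (~ P 0%N 'X_i) (i \in U).
  by rewrite inE; case: excluded_middle_informative => Pi; constructor.
have [_ _ P0prime] := prime_chain_prime chainP (leq0n n).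
have [_ IP _ _] := chainP.
exists U.
  move=> i j /UP nPi /UP nPj ij; apply/negP => adj_ij.
  have : P 0%N ('X_i * 'X_j).
    by apply: IP => // J _ JG; apply: JG; exists i, j.
  by case/P0prime.
apply: prime_chain_length_le_card chainP _ => i; rewrite inE negbK.
by case: excluded_middle_informative.
Qed.

Lemma edge_ideal_dim d :
  (exists2 M, stable_set M & (d <= #|M|)%N) -> (forall U, stable_set U -> (#|U| <= d)%N) ->
  quot_krull_dim_eq (ideal_gen edge_ideal_gens) d.
Proof.
move=> [M stableM dM] max_d; split; first exact: stable_set_prime_chain stableM dM.
move=> n P /edge_ideal_prime_chain_le [U stableU nU].
exact: leq_trans nU (max_d U stableU).
Qed.

End EdgeIdeal.

Local Close Scope ring_scope.

Section Forest.
Variables (V : finType) (e : rel V).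

Lemma path_rel_avoid1 x y p : path (rel_avoid e [set x]) y p -> x \notin p.
Proof.
elim: p y => //= z p IHp y /andP [/and3P [_ _ zx] /IHp xp].
by rewrite inE negb_or xp andbT; rewrite inE eq_sym in zx.
Qed.

Lemma leaf_neighbour_uniq w c c' : degree e w = 1 -> e w c -> e w c' -> c = c'.
Proof.
move=> /eqP/cards1P [a Nw] wc wc'.
have : c \in [set y | e w y] by rewrite inE.
have : c' \in [set y | e w y] by rewrite inE.
by rewrite Nw !inE => /eqP -> /eqP ->.
Qed.

Lemma degree_eq1 x y :
  e x y -> (forall z, e x z -> z = y) -> degree e x = 1.
Proof.
move=> xy Nx; rewrite /degree (_ : [set z | e x z] = [set y]) ?cards1 //.
by apply/setP => z; rewrite !inE; apply/idP/eqP => [/Nx|->].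
Qed.

Hypotheses (e_sym : ssrbool.symmetric e) (e_irr : irreflexive e) (e_acyclic : acyclic e).

(* A path from [y] to [z] avoiding [x] would close the cycle [x y ... z]. *)
Lemma two_neighbours_cutpoint x y z : e x y -> e x z -> y != z -> cutpoint e x.
Proof.
move=> xy xz yz.
have yx : y != x by apply: contraTneq xy => ->; rewrite e_irr.
have zx : z != x by apply: contraTneq xz => ->; rewrite e_irr.
apply/existsP; exists y; apply/existsP; exists z; rewrite yx zx /=.
apply/negP => /connectP [p p_avoid z_last]; move: z_last.
case: (shortenP p_avoid) => q q_avoid q_uniq _ z_last.
have xq := path_rel_avoid1 q_avoid.
have q_path : path e y q by apply: sub_path q_avoid => a b /and3P [].
have q_nil : q != [::] by apply: contra yz => /eqP q0; rewrite z_last q0.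
have : cycle e (x :: y :: q) by rewrite /= xy rcons_path q_path -z_last e_sym.
apply/negP/e_acyclic; last by case: q q_nil {q_avoid q_uniq xq q_path z_last}.
by rewrite /= in q_uniq *; rewrite q_uniq andbT inE negb_or eq_sym yx.
Qed.

End Forest.

Section Caterpillar.
Variables (V : finType) (e : rel V).
Hypothesis catE : caterpillar e.

Lemma caterpillar_sym : ssrbool.symmetric e. Proof. by case: catE => [[[]]]. Qed.
Let e_irr : irreflexive e. Proof. by case: catE => [[[]]]. Qed.
Let e_acyclic : acyclic e. Proof. by case: catE => [[_ []]]. Qed.

(* Otherwise [x] and [y] would be two leaves forming a whole component, i.e.
   all of the tree, leaving an empty spine. *)
Lemma caterpillar_edge_cutpoint x y : e x y -> cutpoint e x || cutpoint e y.
Proof.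
move=> xy; have yx : e y x by rewrite caterpillar_sym.
have [z /andP [xz zy]|Nx] := pickP (fun z => e x z && (z != y)).
  by rewrite (two_neighbours_cutpoint caterpillar_sym e_irr e_acyclic xy xz) // eq_sym.
have [z /andP [yz zx]|Ny] := pickP (fun z => e y z && (z != x)).
  by rewrite (two_neighbours_cutpoint caterpillar_sym e_irr e_acyclic yx yz) ?orbT // eq_sym.
have {}Nx z : e x z -> z = y by move=> xz; apply/eqP; move: (Nx z); rewrite xz => /negbFE.
have {}Ny z : e y z -> z = x by move=> yz; apply/eqP; move: (Ny z); rewrite yz => /negbFE.
case: catE => [[_ [connE _]] [v [p [_ spine _]]]].
have xy_closed : closed e (mem [set x; y]).
  suff sub a b : e a b -> a \in [set x; y] -> b \in [set x; y].
    by move=> a b ab; apply/idP/idP; apply: sub; rewrite // caterpillar_sym.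
  by move=> ab; rewrite !inE => /orP [] /eqP a_eq; rewrite a_eq in ab;
    rewrite ?(Nx _ ab) ?(Ny _ ab) eqxx ?orbT.
have : v \in [set x; y] by rewrite -(closed_connect xy_closed (connE x v)) !inE eqxx.
have : v \in [set z | degree e z != 1] by rewrite -spine mem_head.
rewrite !inE => deg_v /orP [] /eqP v_eq; rewrite v_eq in deg_v.
  by rewrite (degree_eq1 xy Nx) in deg_v.
by rewrite (degree_eq1 yx Ny) in deg_v.
Qed.

(* The neighbours of [c] that are not leaves lie on the chordless spine, so
   they are among the two spine neighbours of [c]. *)
Lemma caterpillar_leaf_neighbour c :
  3 <= degree e c -> exists w, e c w && (degree e w == 1).
Proof.
move=> deg_c; apply/existsP; apply: contraT => /existsPn no_leaf.
case: catE => [_ [v [p [_ spine chordless]]]].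
set s := v :: p in spine chordless.
have c_s : c \in s by rewrite spine inE; apply: contraTneq deg_c => ->.
set i := index c s; have i_s : i < size s by rewrite index_mem.
have : [set z | e c z] \subset [set nth v s i.+1; nth v s i.-1].
  apply/subsetP => w; rewrite inE => cw.
  have w_s : w \in s by rewrite spine inE; move: (no_leaf w); rewrite cw.
  have := chordless i (index w s) i_s; rewrite index_mem => /(_ w_s).
  rewrite !nth_index // cw => /esym /orP [] /eqP idx_w.
    by rewrite !inE idx_w nth_index // eqxx.
  by rewrite !inE -idx_w /= nth_index // eqxx orbT.
move/subset_leq_card; rewrite cards2; move: deg_c; rewrite /degree.
by case: (_ != _) => /=; lia.
Qed.

End Caterpillar.

Definition matching (V : finType) (e : rel V) (M : {set {set V}}) : Prop :=
  M \subset edges e /\ {in M &, forall u v, u != v -> u :&: v = set0}.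

Lemma line_graph_dim (F : fieldType) (V : finType) (e : rel V) d :
  (exists2 M, matching e M & d <= #|M|) ->
  (forall M, matching e M -> #|M| <= d) ->
  quot_krull_dim_eq (edge_ideal_line_graph F e) d.
Proof.
move=> [M [Me Mdisj] dM] max_d.
have edge_of_inj : injective (@edge_of V e) := enum_val_inj.
apply: (@edge_ideal_dim F _ (fun i j => edge_of i :&: edge_of j != set0)).
  exists [set i : 'I_#|edges e| | edge_of i \in M].
    move=> i j; rewrite !inE => iM jM ij; rewrite negbK; apply/eqP/Mdisj => //.
    by apply: contra ij => /eqP/edge_of_inj ->.
  suff -> : #|[set i : 'I_#|edges e| | edge_of i \in M]| = #|M| by [].
  rewrite -(card_imset _ edge_of_inj); apply: eq_card => u.
  apply/imsetP/idP => [[i] | uM]; first by rewrite inE => + ->.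
  have ue := subsetP Me u uM.
  by exists (enum_rank_in ue u); rewrite ?inE /edge_of enum_rankK_in.
move=> U stableU; rewrite -(card_imset _ edge_of_inj); apply: max_d; split.
  by apply/subsetP => _ /imsetP [i _ ->]; apply: enum_valP.
move=> _ _ /imsetP [i iU ->] /imsetP [j jU ->] ij.
apply/eqP; rewrite -[_ == _]negbK; apply: stableU => //.
by apply: contra ij => /eqP ->.
Qed.

Section CaterpillarMatchings.
Variables (V : finType) (e : rel V).
Hypothesis catE : caterpillar e.

(* Every edge has a cutpoint end, and disjoint edges have distinct ones. *)
Lemma matching_card_le_cutpoints M : matching e M -> #|M| <= #|cutpoints e|.
Proof.
move=> [Me Mdisj]; have [v0 _] : exists v0 : V, true by case: catE => [_ [v _]]; exists v.
pose f u := odflt v0 [pick c in cutpoints e :&: u].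
have fP u : u \in M -> f u \in cutpoints e :&: u.
  move=> uM; rewrite /f; case: pickP => [c //|no_c].
  have := subsetP Me u uM; rewrite inE => /existsP [x /existsP [y /andP [xy /eqP u_xy]]].
  case/orP: (caterpillar_edge_cutpoint catE xy) => [x_cut|y_cut].
    by move: (no_c x); rewrite u_xy !inE x_cut eqxx.
  by move: (no_c y); rewrite u_xy !inE y_cut eqxx orbT.
rewrite -(card_in_imset (f := f)).
  apply/subset_leq_card/subsetP => _ /imsetP [u uM ->].
  by have := fP u uM; rewrite inE => /andP [].
move=> u v uM vM fuv; apply/eqP; apply: contraT => uv.
have := fP u uM; have := fP v vM; rewrite -fuv !inE => /andP [_ fv] /andP [_ fu].
by have /setP /(_ (f u)) := Mdisj u v uM vM uv; rewrite !inE fu fv.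
Qed.

Hypothesis cut_deg3 : forall x, x \in cutpoints e -> 3 <= degree e x.

Lemma pendant_matching : exists2 M, matching e M & #|cutpoints e| <= #|M|.
Proof.
pose l c := odflt c [pick w | e c w && (degree e w == 1)].
have lP c : c \in cutpoints e -> e c (l c) /\ degree e (l c) = 1.
  move=> c_cut; rewrite /l; case: pickP => [w /andP [cw /eqP //]|no_leaf].
  have [w cw_leaf] := caterpillar_leaf_neighbour catE (cut_deg3 c_cut).
  by move: (no_leaf w); rewrite cw_leaf.
have l_cut c c' : c \in cutpoints e -> c' \in cutpoints e -> c != l c'.
  move=> c_cut c'_cut; apply: contraTneq (cut_deg3 c_cut) => ->.
  by rewrite (lP c' c'_cut).2.
exists [set [set c; l c] | c in cutpoints e]; last first.
  rewrite card_in_imset // => c c' c_cut c'_cut /setP /(_ c).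
  rewrite !inE eqxx /= => /esym /orP [/eqP //|/eqP c_l].
  by move: (l_cut c c' c_cut c'_cut); rewrite c_l eqxx.
split.
  apply/subsetP => _ /imsetP [c c_cut ->]; rewrite inE.
  by apply/existsP; exists c; apply/existsP; exists (l c); rewrite (lP c c_cut).1 eqxx.
move=> _ _ /imsetP [c c_cut ->] /imsetP [c' c'_cut ->] cc'.
have {}cc' : c != c' by apply: contraNneq cc' => ->.
apply/eqP/set0Pn => -[z]; rewrite !inE.
case/andP => /orP [] /eqP -> /orP [] /eqP zc'.
- by rewrite zc' eqxx in cc'.
- by move: (l_cut c c' c_cut c'_cut); rewrite zc' eqxx.
- by move: (l_cut c' c c'_cut c_cut); rewrite -zc' eqxx.
- have lc_c : e (l c) c by rewrite (caterpillar_sym catE) (lP c c_cut).1.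
  have lc_c' : e (l c) c' by rewrite zc' (caterpillar_sym catE) (lP c' c'_cut).1.
  by rewrite (leaf_neighbour_uniq (lP c c_cut).2 lc_c lc_c') eqxx in cc'.
Qed.

End CaterpillarMatchings.

Theorem proposition3p6 (F : fieldType) (V : finType) (e : rel V) :
  caterpillar e ->
  (forall x, x \in cutpoints e -> 3 <= degree e x) ->
  quot_krull_dim_eq (edge_ideal_line_graph F e) #|cutpoints e|.
Proof.
move=> catE cut_deg3; apply: line_graph_dim.
  exact: pendant_matching.
exact: matching_card_le_cutpoints.
Qed.
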